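(* For every integer $q\ge2$, $S_q(q):=\sum_{l_1,l_2\in\mathbb Z}H_q(l_1,l_2,q)=0$.
   Context: $(z)_k=z(z+1)\cdots(z+k-1)$ denotes the rising factorial. For integers $l_1,l_2,k$ and $q\ge1$, \[ H_q(l_{1},l_{2},k)=\frac{(-1)^{l_1+l_2}\left(-\frac{1}{2}\right)_{l_1} \left(-\frac{1}{2}\right)_{l_2} \left(\frac{1}{2}\right)_{q-l_{1}} \left(\frac{1}{2}\right)_{q-l_{2}}}{(2q-l_{1}-l_{2}-k)!\,(l_{2}-l_{1}+k)!\,(l_{1}-l_{2}+k)!\,(l_{1}+l_{2}-k)!}, \] where Pochhammer symbols and factorials are expressed via the Gamma function, with $1/\Gamma$ vanishing at non-positive integers (so only finitely many terms are non-zero). *)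

From mathcomp Require Import all_boot all_order all_algebra.
Set Implicit Arguments. Unset Strict Implicit. Unset Printing Implicit Defensive.
Import Order.TTheory GRing.Theory Num.Theory.
Local Open Scope ring_scope.

(* Rising factorial (z)_k = Gamma(z+k)/Gamma(z) for an integer k.
   k = n >= 0 : z (z+1) ... (z+n-1);
   k = -(n+1) : Gamma(z-n-1)/Gamma(z) = 1/((z-1)(z-2)...(z-n-1)). *)
Definition rising (z : rat) (k : int) : rat :=
  match k with
  | Posz n => \prod_(i < n) (z + i%:R)
  | Negz n => (\prod_(i < n.+1) (z - (i.+1)%:R))^-1
  end.

(* 1/m! = 1/Gamma(m+1), which vanishes when m is a negative integer. *)
Definition invfact (m : int) : rat :=
  match m with
  | Posz n => (n`!)%:R^-1
  | Negz _ => 0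
  end.

Definition H (q l1 l2 k : int) : rat :=
  (-1) ^ (l1 + l2) * rising (-(1/2)) l1 * rising (-(1/2)) l2
  * rising (1/2) (q - l1) * rising (1/2) (q - l2)
  * invfact (2 * q - l1 - l2 - k) * invfact (l2 - l1 + k)
  * invfact (l1 - l2 + k) * invfact (l1 + l2 - k).

Definition zrange (N : nat) : seq int :=
  [seq (i%:Z - N%:Z) | i <- iota 0 (N.*2.+1)].

(* On the support of H_q(., ., q) the four factorials force l2 = q - l1 and
   0 <= l1 <= q, and there H_q(l1, q - l1, q) = (-1)^q F(l1) F(q - l1) with
   F(i) = (-1/2)_i (1/2)_i / (2i)!, the Taylor coefficients of sqrt(1 - x/4).
   Hence S_q(q) = (-1)^q [x^q] (1 - x/4), which vanishes for q >= 2.  Instead of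
   power series we use the recurrence (i+1) F(i+1) = (i/4 - 1/8) F(i): it turns
   into (n+1) c(n+1) = (n-1)/4 c(n) for the Cauchy square c of F, so c(n) = 0
   for every n >= 2. *)
From mathcomp Require Import all_boot all_order all_algebra.
From mathcomp Require Import ring lra zify.
Set Implicit Arguments. Unset Strict Implicit. Unset Printing Implicit Defensive.
Import Order.TTheory GRing.Theory Num.Theory.
Local Open Scope ring_scope.

Lemma big_seq_support (R : nmodType) (T : eqType) (s t : seq T) (f : T -> R) :
  uniq s -> uniq t -> {subset t <= s} ->
  (forall x, x \in s -> x \notin t -> f x = 0) ->
  \sum_(x <- s) f x = \sum_(x <- t) f x.
Proof.
move=> s_uniq t_uniq sub_ts f_supp.
rewrite -(big_rmcond_in _ f_supp) -big_filter; apply: perm_big.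
apply: uniq_perm; rewrite ?filter_uniq // => x.
by rewrite mem_filter andb_idr //; apply: sub_ts.
Qed.

Definition selfconv (R : pzSemiRingType) (a : nat -> R) (n : nat) : R :=
  \sum_(i < n.+1) a i * a (n - i)%N.

Lemma selfconv_weighted (R : comPzRingType) (a : nat -> R) n :
  (\sum_(i < n.+1) i%:R * (a i * a (n - i)%N)) *+ 2 = n%:R * selfconv a n.
Proof.
have rev_sum : \sum_(i < n.+1) i%:R * (a i * a (n - i)%N)
             = \sum_(i < n.+1) (n - i)%N%:R * (a i * a (n - i)%N).
  rewrite (reindex_inj rev_ord_inj) /=; apply: eq_bigr => i _.
  by rewrite subSS subKn ?leq_ord // [a i * _]mulrC.
rewrite [_ *+ 2]mulr2n {2}rev_sum -big_split mulr_sumr; apply: eq_bigr => i _ /=.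
by rewrite -mulrDl -natrD subnKC ?leq_ord.
Qed.

Lemma selfconv_rec (R : comPzRingType) (a : nat -> R) (alpha beta : R) :
  (forall i, i.+1%:R * a i.+1 = (alpha * i%:R + beta) * a i) ->
  forall n, n.+1%:R * selfconv a n.+1 = (alpha * n%:R + beta *+ 2) * selfconv a n.
Proof.
move=> a_rec n; rewrite -selfconv_weighted big_ord_recl mul0r add0r.
under eq_bigr => i _ do rewrite lift0 subSS mulrA a_rec -mulrA mulrDl -mulrA.
rewrite big_split /= -!mulr_sumr -/(selfconv a n).
by rewrite mulrnDl -[alpha * _ *+ 2]mulrnAr selfconv_weighted -mulrnAr; ring.
Qed.

Lemma selfconv_eq0 (R : numDomainType) (a : nat -> R) (alpha beta : R) m :
  (forall i, i.+1%:R * a i.+1 = (alpha * i%:R + beta) * a i) ->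
  alpha * m%:R + beta *+ 2 = 0 ->
  forall n, (m < n)%N -> selfconv a n = 0.
Proof.
move=> a_rec coef_m0; elim=> // n IHn lt_mn.
have rhs0 : (alpha * n%:R + beta *+ 2) * selfconv a n = 0.
  have [<-|ne_mn] := eqVneq m n; first by rewrite coef_m0 mul0r.
  by rewrite IHn ?mulr0 // ltn_neqAle ne_mn.
by move: (selfconv_rec a_rec n); rewrite rhs0 => /eqP; rewrite mulf_eq0 pnatr_eq0 => /eqP.
Qed.

Definition sqrt_coef (i : nat) : rat :=
  rising (-(1/2)) i%:Z * rising (1/2) i%:Z * invfact (2 * i)%N%:Z.

Lemma rising_S (z : rat) (i : nat) : rising z i.+1 = rising z i * (z + i%:R).
Proof. by rewrite /rising big_ord_recr. Qed.

Lemma invfact_double_S (i : nat) :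
  invfact (2 * i.+1)%N = invfact (2 * i)%N / ((2 * i%:R + 1) * (2 * i%:R + 2)).
Proof.
have double_S1 : (2 * i).+1%:R = 2 * i%:R + 1 :> rat by rewrite -natr1 natrM.
have double_S2 : (2 * i).+2%:R = 2 * i%:R + 2 :> rat by rewrite -addn2 natrD natrM.
rewrite /invfact (_ : (2 * i.+1 = (2 * i).+2)%N); last by lia.
by rewrite !factS !natrM double_S1 double_S2 !invfM; ring.
Qed.

Lemma sqrt_coef_rec (i : nat) : i.+1%:R * sqrt_coef i.+1 = (1/4 * i%:R - 1/8) * sqrt_coef i.
Proof.
rewrite /sqrt_coef !rising_S invfact_double_S -natr1.
have i_ge0 : 0 <= i%:R :> rat by [].
by field; lra.
Qed.

Lemma invfact_ge0 (m : int) : invfact m != 0 -> 0 <= m.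
Proof. by case: m. Qed.

Lemma H_support (q l1 l2 : int) :
  H q l1 l2 q != 0 -> l2 = q - l1 /\ 0 <= l1 <= q.
Proof.
rewrite /H !mulf_eq0 !negb_or.
case/andP=> /andP[/andP[/andP[_ /invfact_ge0 ?] /invfact_ge0 ?] /invfact_ge0 ?] /invfact_ge0 ?.
split; [lia | apply/andP; split; lia].
Qed.

Lemma H_antidiag (n i : nat) : (i <= n)%N ->
  H n i (n%:Z - i%:Z) n = (-1) ^ n%:Z * (sqrt_coef i * sqrt_coef (n - i)%N).
Proof.
move=> le_in; rewrite /H /sqrt_coef.
have -> : n%:Z - i%:Z = (n - i)%N%:Z by lia.
have -> : i%:Z + (n - i)%N%:Z = n%:Z by lia.
have -> : n%:Z - (n - i)%N%:Z = i%:Z by lia.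
have -> : 2 * n%:Z - i%:Z - (n - i)%N%:Z - n%:Z = 0 by lia.
have -> : (n - i)%N%:Z - i%:Z + n%:Z = (2 * (n - i))%N%:Z by lia.
have -> : i%:Z - (n - i)%N%:Z + n%:Z = (2 * i)%N%:Z by lia.
have -> : invfact 0 = 1 by rewrite /invfact /= invr1.
by rewrite subrr mulr1; ring.
Qed.

Lemma mem_zrange (N : nat) (x : int) : (x \in zrange N) = (- N%:Z <= x <= N).
Proof.
apply/mapP/idP => [[i] | /andP[? ?]]; first by rewrite mem_iota; lia.
by exists (absz (x + N)); rewrite ?mem_iota; lia.
Qed.

Lemma uniq_zrange (N : nat) : uniq (zrange N).
Proof. by rewrite map_inj_uniq ?iota_uniq // => a b; lia. Qed.

Lemma sum_H_zrange (n : nat) :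
  \sum_(l1 <- zrange n) \sum_(l2 <- zrange n) H n l1 l2 n
  = \sum_(i < n.+1) H n i (n%:Z - i%:Z) n.
Proof.
pose antidiag := [seq Posz i | i <- iota 0 n.+1].
have mem_antidiag l : (l \in antidiag) = (0 <= l <= n).
  apply/mapP/idP => [[i] | /andP[? ?]]; first by rewrite mem_iota; lia.
  by exists `|l|%N; rewrite ?mem_iota; lia.
have H0 (l1 l2 : int) : ~~ (0 <= l1 <= n%:Z) || (l2 != n%:Z - l1) -> H n l1 l2 n = 0.
  by apply: contraTeq => /H_support[-> ->]; rewrite eqxx.
rewrite (big_seq_support (t := antidiag) (uniq_zrange n)); last 3 first.
- by rewrite map_inj_uniq ?iota_uniq // => ? ? [].
- by move=> l; rewrite mem_antidiag mem_zrange => /andP[? ?]; apply/andP; split; lia.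
- by move=> l1 _; rewrite mem_antidiag => l1_out; rewrite big1 // => l2 _; rewrite H0 ?l1_out.
rewrite big_seq; under eq_bigr => l1.
  rewrite mem_antidiag => l1_in.
  rewrite (big_seq_support (t := [:: n%:Z - l1]) (uniq_zrange n)) //.
  - by rewrite big_seq1 over.
  - by move=> x; rewrite inE => /eqP->; rewrite mem_zrange; lia.
  - by move=> l2 _; rewrite inE => l2_out; rewrite H0 ?l2_out ?orbT.
by rewrite -big_seq big_map -[iota 0 n.+1]/(index_iota 0 n.+1) big_mkord.
Qed.

Theorem lemma7p4 (q : int) (hq : 2 <= q) :
  exists N : nat,
    (forall l1 l2 : int, H q l1 l2 q != 0 -> (`|l1| <= N%:Z) && (`|l2| <= N%:Z)) /\
    \sum_(l1 <- zrange N) \sum_(l2 <- zrange N) H q l1 l2 q = 0.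
Proof.
case: q hq => [n|//] hn; exists n; split.
  by move=> l1 l2 /H_support[-> /andP[? ?]]; apply/andP; split; lia.
rewrite sum_H_zrange.
under eq_bigr => i _ do rewrite H_antidiag ?leq_ord //.
have coef1_eq0 : 1/4 * 1%:R + (- (1/8)) *+ 2 = 0 :> rat by rewrite mulr2n; lra.
have lt1n : (1 < n)%N by lia.
by rewrite -mulr_sumr -/(selfconv sqrt_coef n) (selfconv_eq0 sqrt_coef_rec coef1_eq0 lt1n) mulr0.
Qed.
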